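(* Let $N\ge1$, let $\xi_0,\dots,\xi_N$ be the LGL nodes on $[-1,1]$ with LGL weights $\omega_0,\dots,\omega_N$, $\mathcal{M}=\mathrm{diag}(\omega_0,\dots,\omega_N)$, and let $\mathcal{V}_{ij}=L_j(\xi_i)$ ($i,j=0,\dots,N$) be the Vandermonde matrix of the normalized Legendre polynomials $L_j=\sqrt{(2j+1)/2}\,P_j$. Let $\mathcal{C}=\mathrm{diag}(\sigma_0,\dots,\sigma_N)$ with $0\le\sigma_i\le1$ for all $i$ and $\sigma_N=0$, and let $\mathcal{F}=\mathcal{V}\mathcal{C}\mathcal{V}^{-1}$. Then $\mathcal{F}$ is contractive in the sense that $$\mathcal{F}^T\mathcal{M}\,\mathcal{F}-\mathcal{M}\le 0$$ (negative semidefinite), i.e. $\|\mathcal{F}\mathbf{U}\|_N\le\|\mathbf{U}\|_N$ for all $\mathbf{U}\in\mathbb{R}^{N+1}$, where $\|\mathbf{U}\|_N^2=\mathbf{U}^T\mathcal{M}\mathbf{U}$.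
   Context: The LGL nodes are $\xi_0=-1$, $\xi_N=1$ and the zeros of $P_N'$ (with $P_N$ the degree-$N$ Legendre polynomial); the LGL weights are $\omega_i=\frac{2}{N(N+1)P_N(\xi_i)^2}$. In the paper the entries $\sigma_i$ come from a filter function $\sigma:\mathbb{R}^+\to[0,1]$ (Vandeven) that vanishes for arguments $\ge1$, so the highest mode is clipped, $\sigma_N=0$. *)

From HB Require Import structures.
From mathcomp Require Import all_boot all_order all_algebra.
Set Implicit Arguments. Unset Strict Implicit. Unset Printing Implicit Defensive.
Import Order.TTheory GRing.Theory Num.Theory.
Local Open Scope ring_scope.

Section Legendre.
Variable R : rcfType.

(* legendre_pair n = (P_n, P_{n-1}) via Bonnet's recurrence
   (n+1) P_{n+1} = (2n+1) X P_n - n P_{n-1}, P_0 = 1, P_1 = X. *)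
Fixpoint legendre_pair (n : nat) : {poly R} * {poly R} :=
  match n with
  | 0 => (1, 0)
  | n'.+1 =>
      let (p, q) := legendre_pair n' in
      ((n'.+1%:R)^-1 *: ((n'.*2.+1)%:R *: ('X * p) - n'%:R *: q), p)
  end.

Definition legendreP (n : nat) : {poly R} := (legendre_pair n).1.

Definition normLegendre (j : nat) (x : R) : R :=
  Num.sqrt ((j.*2.+1)%:R / 2%:R) * (legendreP j).[x].

(* Since P_N' has exactly
   N-1 distinct zeros (all in (-1,1)), this determines xi uniquely. *)
Definition is_LGL_nodes (N : nat) (xi : 'I_N.+1 -> R) : Prop :=
  [/\ xi ord0 = -1, xi ord_max = 1,
      (forall i j : 'I_N.+1, (i < j)%N -> xi i < xi j) &
      (forall i : 'I_N.+1, (0 < i < N)%N -> root (legendreP N)^`() (xi i))].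

Definition LGL_weight (N : nat) (xi : 'I_N.+1 -> R) (i : 'I_N.+1) : R :=
  2%:R / ((N * N.+1)%:R * ((legendreP N).[xi i]) ^+ 2).

Definition massM (N : nat) (xi : 'I_N.+1 -> R) : 'M[R]_N.+1 :=
  \matrix_(i, j) (if i == j then LGL_weight xi i else 0).

Definition vandL (N : nat) (xi : 'I_N.+1 -> R) : 'M[R]_N.+1 :=
  \matrix_(i, j) normLegendre j (xi i).

Definition filterM (N : nat) (xi : 'I_N.+1 -> R) (sigma : 'I_N.+1 -> R)
  : 'M[R]_N.+1 :=
  vandL xi *m (\matrix_(i, j) (if i == j then sigma i else 0)) *m invmx (vandL xi).

Definition neg_semidef (n : nat) (A : 'M[R]_n) : Prop :=
  forall u : 'cV[R]_n, (u^T *m A *m u) ord0 ord0 <= 0.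

End Legendre.

From HB Require Import structures.
From mathcomp Require Import all_boot all_order all_algebra.
From mathcomp Require Import ring lra.
Set Implicit Arguments. Unset Strict Implicit. Unset Printing Implicit Defensive.
Import Order.TTheory GRing.Theory Num.Theory.
Local Open Scope ring_scope.

(* At an LGL node x the product (x^2 - 1) P_N'(x) vanishes, which by the
   classical derivative identities forces P_(N-1)(x) = x P_N(x).  Inserted into
   the Christoffel-Darboux formula and its confluent form, this shows that the
   Legendre polynomials are orthogonal for the LGL quadrature, with squared
   discrete norms 2/(2m+1) for m < N but 2/N for m = N.  Hence V^T M V is a
   positive diagonal matrix: the discrete norm of U is a positively weighted sum
   of squares of the modal coefficients V^-1 U, and the filter multiplies the
   j-th coefficient by sigma_j, which cannot increase such a sum when
   |sigma_j| <= 1.  The top mode stays orthogonal although it is not integrated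
   exactly. *)

Lemma diag_mx_ifE (R : pzSemiRingType) n (f : 'I_n -> R) :
  \matrix_(i, j) (if i == j then f i else 0) = diag_mx (\row_i f i).
Proof.
by apply/matrixP => i j; rewrite !mxE; case: (i == j); rewrite ?mulr1n ?mulr0n.
Qed.

Lemma dual_gram_diag (F : fieldType) n (A M : 'M[F]_n) (d : 'I_n -> F) (a : F) :
  a != 0 -> (forall j, d j != 0) -> A *m diag_mx (\row_j d j) *m A^T *m M = a%:M ->
  A^T *m M *m A = diag_mx (\row_j (a / d j)).
Proof.
move=> a_neq0 d_neq0 gramA.
pose B := diag_mx (\row_j d j) *m A^T *m M.
have BA : B *m A = a%:M.
  have : A *m (a^-1 *: B) = 1%:M.
    by rewrite -scalemxAr /B !mulmxA gramA scale_scalar_mx mulVf.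
  move/mulmx1C; rewrite -scalemxAl => /(congr1 ( *:%R a)).
  by rewrite scalerA mulfV // scale1r => ->; rewrite scalemx1.
have d_inv : diag_mx (\row_j (d j)^-1) *m diag_mx (\row_j d j) = 1%:M.
  rewrite mulmx_diag -diag_const_mx; congr diag_mx.
  by apply/rowP => j; rewrite !mxE mulVf.
have -> : A^T *m M *m A = diag_mx (\row_j (d j)^-1) *m (B *m A).
  by rewrite /B !mulmxA d_inv mul1mx.
rewrite BA mul_mx_scalar.
by apply/matrixP => i j; rewrite !mxE mulrnAr mulrC.
Qed.

Lemma filter_gram_congr (R : comUnitRingType) n (V M : 'M[R]_n) (c k : 'rV[R]_n) :
  V \in unitmx -> V^T *m M *m V = diag_mx k ->
  (V *m diag_mx c *m invmx V)^T *m M *m (V *m diag_mx c *m invmx V) - M =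
  (invmx V)^T *m (diag_mx c *m diag_mx k *m diag_mx c - diag_mx k) *m invmx V.
Proof.
move=> V_unit gramV; rewrite mulmxBr mulmxBl; congr (_ - _).
  by rewrite -gramV !trmx_mul tr_diag_mx !mulmxA.
by rewrite -gramV !mulmxA -trmx_mul mulmxV // trmx1 mul1mx mulmxK.
Qed.

Section NegSemidef.
Variable R : rcfType.

Lemma neg_semidef_diag n (d : 'rV[R]_n) :
  (forall j, d 0 j <= 0) -> neg_semidef (diag_mx d).
Proof.
move=> d_le0 u; rewrite mul_mx_diag mxE; apply: sumr_le0 => j _; rewrite !mxE.
by rewrite mulrC mulrA -expr2 mulr_ge0_le0 ?sqr_ge0.
Qed.

Lemma neg_semidef_congr n (A B : 'M[R]_n) :
  neg_semidef A -> neg_semidef (B^T *m A *m B).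
Proof. by move=> A_nsd u; have := A_nsd (B *m u); rewrite trmx_mul !mulmxA. Qed.

Lemma filter_contractive n (V M : 'M[R]_n) (c k : 'rV[R]_n) :
  V^T *m M *m V = diag_mx k -> (forall j, 0 < k 0 j) -> (forall j, `|c 0 j| <= 1) ->
  neg_semidef ((V *m diag_mx c *m invmx V)^T *m M *m (V *m diag_mx c *m invmx V) - M).
Proof.
move=> gramV k_gt0 c_le1.
have V_unit : V \in unitmx.
  have : V^T *m M *m V \in unitmx.
    by rewrite gramV unitmxE det_diag unitfE lt0r_neq0 // prodr_gt0.
  by rewrite unitmx_mul => /andP[].
rewrite (filter_gram_congr c V_unit gramV); apply/neg_semidef_congr.
rewrite !mulmx_diag -raddfB /=; apply: neg_semidef_diag => j; rewrite !mxE.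
have c_sq_le1 : c 0 j ^+ 2 <= 1.
  by rewrite -real_normK ?num_real // exprn_ile1.
have := k_gt0 j; nra.
Qed.

End NegSemidef.

Section LegendreIdentities.
Variable R : rcfType.

Local Notation P n := (legendreP R n).
(* The second component of [legendre_pair n] is P_(n-1), with P_(-1) = 0. *)
Local Notation Q n := (legendre_pair R n).2.

Lemma legendre_pair_succ n :
  legendre_pair R n.+1 =
  (n.+1%:R^-1 *: ((n.*2.+1)%:R *: ('X * P n) - n%:R *: Q n), P n).
Proof. by rewrite /legendreP /=; case: (legendre_pair R n). Qed.

Lemma legendre_prev_succ n : Q n.+1 = P n.
Proof. by rewrite legendre_pair_succ. Qed.

Lemma natr_double_succ n : (n.*2.+1)%:R = 2 * n%:R + 1 :> R.
Proof. by rewrite -addnn -addn1 !natrD; ring. Qed.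

Lemma horner_legendreP_succ n x :
  (P n.+1).[x] = ((2 * n%:R + 1) * (x * (P n).[x]) - n%:R * (Q n).[x]) / (n%:R + 1).
Proof.
rewrite {1}/legendreP legendre_pair_succ /= hornerZ hornerD hornerN !hornerZ.
by rewrite hornerM hornerX natr_double_succ -natr1 mulrC.
Qed.

Lemma horner_deriv_legendreP_succ n x :
  (P n.+1)^`().[x] =
  ((2 * n%:R + 1) * ((P n).[x] + x * (P n)^`().[x]) - n%:R * (Q n)^`().[x])
    / (n%:R + 1).
Proof.
rewrite {1}/legendreP legendre_pair_succ /= derivZ derivB !derivZ derivM derivX.
rewrite hornerZ hornerD hornerN !hornerZ hornerD !hornerM hornerX hornerC mul1r.
by rewrite natr_double_succ -natr1 mulrC.
Qed.

Lemma natr1_neq0 n : n%:R + 1 != 0 :> R.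
Proof. by rewrite natr1 pnatr_eq0. Qed.

Lemma legendre_deriv_identities n x :
  (x ^+ 2 - 1) * (P n)^`().[x] = n%:R * (x * (P n).[x] - (Q n).[x]) /\
  x * (P n)^`().[x] - (Q n)^`().[x] = n%:R * (P n).[x].
Proof.
elim: n => [|n [IHsq IHlin]].
  by rewrite /legendreP /= -polyC1 derivC deriv0 !hornerE; split; ring.
rewrite horner_legendreP_succ horner_deriv_legendreP_succ !legendre_prev_succ.
have -> : (Q n)^`().[x] = x * (P n)^`().[x] - n%:R * (P n).[x] by rewrite -IHlin; ring.
have n1 := natr1_neq0 n; rewrite -[n.+1%:R]natr1.
move: IHsq n1; move: (P n).[x] (Q n).[x] (P n)^`().[x] (n%:R : R) => p q p' m IHsq n1.
split; apply/eqP; rewrite -subr_eq0; apply/eqP.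
- have -> : (x ^+ 2 - 1) * (((2 * m + 1) * (p + x * p') - m * (x * p' - m * p)) / (m + 1))
      - (m + 1) * (x * (((2 * m + 1) * (x * p) - m * q) / (m + 1)) - p) =
    x * ((x ^+ 2 - 1) * p' - m * (x * p - q)) by field.
  by rewrite IHsq subrr mulr0.
- have -> : x * (((2 * m + 1) * (p + x * p') - m * (x * p' - m * p)) / (m + 1)) - p'
      - (m + 1) * (((2 * m + 1) * (x * p) - m * q) / (m + 1)) =
    (x ^+ 2 - 1) * p' - m * (x * p - q) by field.
  by rewrite IHsq subrr.
Qed.

Lemma christoffel_darboux n x y :
  (x - y) * \sum_(m < n) (m.*2.+1)%:R * ((P m).[x] * (P m).[y]) =
  n%:R * ((P n).[x] * (Q n).[y] - (Q n).[x] * (P n).[y]).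
Proof.
elim: n => [|n IHn]; first by rewrite big_ord0 mul0r mulr0.
rewrite !legendre_prev_succ big_ord_recr /= mulrDr IHn natr_double_succ.
rewrite !horner_legendreP_succ.
have n1 := natr1_neq0 n; rewrite -[n.+1%:R]natr1.
by move: n1; move: (P n).[x] (Q n).[x] (P n).[y] (Q n).[y] (n%:R : R) => *; field.
Qed.

Lemma christoffel_darboux_confluent n x :
  \sum_(m < n) (m.*2.+1)%:R * (P m).[x] ^+ 2 =
  n%:R * ((P n)^`().[x] * (Q n).[x] - (Q n)^`().[x] * (P n).[x]).
Proof.
elim: n => [|n IHn]; first by rewrite big_ord0 mul0r.
rewrite !legendre_prev_succ big_ord_recr /= IHn natr_double_succ.
rewrite horner_legendreP_succ horner_deriv_legendreP_succ.
have n1 := natr1_neq0 n; rewrite -[n.+1%:R]natr1.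
by move: n1; move: (P n).[x] (Q n).[x] (P n)^`().[x] (Q n)^`().[x] (n%:R : R) => *; field.
Qed.

End LegendreIdentities.

Section LGLNodes.
Variables (R : rcfType) (N : nat) (xi : 'I_N.+1 -> R).
Hypotheses (N_gt0 : (0 < N)%N) (xi_lgl : is_LGL_nodes xi).

Local Notation P n := (legendreP R n).
Local Notation Q n := (legendre_pair R n).2.

(* [2 / ||P_m||_N^2] for the discrete LGL norm [||.||_N]. *)
Definition lgl_inv_norm (m : nat) : R := if (m < N)%N then (m.*2.+1)%:R else N%:R.

Lemma lgl_inv_norm_gt0 m : 0 < lgl_inv_norm m.
Proof. by rewrite /lgl_inv_norm; case: ifP; rewrite ltr0n. Qed.

Lemma lgl_node_deriv_eq0 i : (xi i ^+ 2 - 1) * (P N)^`().[xi i] = 0.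
Proof.
case: xi_lgl => xi0 xiN _ xi_root.
have [->|i_neq0] := eqVneq i ord0; first by rewrite xi0 sqrrN expr1n subrr mul0r.
have [->|i_neqN] := eqVneq i ord_max; first by rewrite xiN expr1n subrr mul0r.
suff /xi_root/rootP -> : (0 < i < N)%N by rewrite mulr0.
rewrite lt0n -ltnS ltn_neqAle ltn_ord andbT.
by rewrite -[i != N :> nat]/(i != ord_max) i_neq0 i_neqN.
Qed.

Lemma lgl_node_prev i : (Q N).[xi i] = xi i * (P N).[xi i].
Proof.
have := lgl_node_deriv_eq0 i; case: (legendre_deriv_identities N (xi i)) => -> _.
by move/eqP; rewrite mulf_eq0 pnatr_eq0 eqn0Ngt N_gt0 subr_eq0 => /eqP.
Qed.

Lemma lgl_discrete_orthogonality i l :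
  \sum_(m < N.+1) lgl_inv_norm m * ((P m).[xi i] * (P m).[xi l]) =
  ((N * N.+1)%:R * (P N).[xi i] ^+ 2) *+ (i == l).
Proof.
rewrite big_ord_recr /= /lgl_inv_norm ltnn.
under eq_bigr => m _ do rewrite ltn_ord.
have [<-|i_neq_l] := eqVneq i l.
  under eq_bigr => m _ do rewrite -expr2.
  rewrite christoffel_darboux_confluent lgl_node_prev.
  have -> : (Q N)^`().[xi i] = xi i * (P N)^`().[xi i] - N%:R * (P N).[xi i].
    by case: (legendre_deriv_identities N (xi i)) => _ <-; ring.
  by rewrite mulr1n natrM -natr1; ring.
have xi_neq : xi i - xi l != 0.
  case: xi_lgl => _ _ xi_mono _; rewrite subr_eq0.
  by move: i_neq_l; rewrite neq_ltn => /orP[/xi_mono/lt_eqF->|/xi_mono/gt_eqF->].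
apply: (mulfI xi_neq); rewrite mulr0n mulr0 mulrDr christoffel_darboux !lgl_node_prev.
ring.
Qed.

Lemma lgl_kernel_gt0 i : 0 < (N * N.+1)%:R * (P N).[xi i] ^+ 2.
Proof.
have := lgl_discrete_orthogonality i i; rewrite eqxx mulr1n => <-.
rewrite big_ord_recl.
have -> : (P 0).[xi i] = 1 by rewrite /legendreP /= hornerE.
rewrite !mulr1 ltr_pwDl ?lgl_inv_norm_gt0 //.
by apply: sumr_ge0 => m _; rewrite -expr2 mulr_ge0 ?sqr_ge0 ?ltW ?lgl_inv_norm_gt0.
Qed.

Definition legendre_mx : 'M[R]_N.+1 := \matrix_(i, m) (P m).[xi i].

Lemma legendre_mx_gram_mass :
  legendre_mx *m diag_mx (\row_m lgl_inv_norm m) *m legendre_mx^T *m massM xi = 2%:M.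
Proof.
have -> : legendre_mx *m diag_mx (\row_m lgl_inv_norm m) *m legendre_mx^T =
          diag_mx (\row_i ((N * N.+1)%:R * (P N).[xi i] ^+ 2)).
  apply/matrixP => i l; rewrite mul_mx_diag !mxE -lgl_discrete_orthogonality.
  by apply: eq_bigr => m _; rewrite !mxE; ring.
rewrite /massM diag_mx_ifE mulmx_diag -diag_const_mx; congr diag_mx.
by apply/rowP => i; rewrite !mxE /LGL_weight mulrC divfK // lt0r_neq0 ?lgl_kernel_gt0.
Qed.

Lemma legendre_mx_mass_gram :
  legendre_mx^T *m massM xi *m legendre_mx = diag_mx (\row_m (2 / lgl_inv_norm m)).
Proof.
apply: dual_gram_diag legendre_mx_gram_mass; first by rewrite pnatr_eq0.
by move=> m; rewrite lt0r_neq0 ?lgl_inv_norm_gt0.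
Qed.

Lemma vandL_mass_gram :
  (vandL xi)^T *m massM xi *m vandL xi =
  diag_mx (\row_j ((j.*2.+1)%:R / lgl_inv_norm j)).
Proof.
pose S : 'rV[R]_N.+1 := \row_j Num.sqrt ((j.*2.+1)%:R / 2%:R).
have -> : vandL xi = legendre_mx *m diag_mx S.
  by apply/matrixP => i j; rewrite mul_mx_diag !mxE mulrC.
rewrite trmx_mul tr_diag_mx.
have -> : diag_mx S *m legendre_mx^T *m massM xi *m (legendre_mx *m diag_mx S) =
          diag_mx S *m (legendre_mx^T *m massM xi *m legendre_mx) *m diag_mx S.
  by rewrite !mulmxA.
rewrite legendre_mx_mass_gram !mulmx_diag; congr diag_mx; apply/rowP => j.
rewrite !mxE mulrAC -expr2 sqr_sqrtr ?divr_ge0 // mulrA divfK //.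
by rewrite pnatr_eq0.
Qed.

End LGLNodes.

Theorem proposition2 (R : rcfType) (N : nat) (hN : (1 <= N)%N)
  (xi : 'I_N.+1 -> R) (hxi : is_LGL_nodes xi)
  (sigma : 'I_N.+1 -> R)
  (hsig : forall i, 0 <= sigma i <= 1) (hsigN : sigma ord_max = 0) :
  neg_semidef ((filterM xi sigma)^T *m massM xi *m filterM xi sigma - massM xi).
Proof.
rewrite /filterM diag_mx_ifE.
apply: filter_contractive (vandL_mass_gram hN hxi) _ _ => j; rewrite mxE.
  by rewrite divr_gt0 ?ltr0n ?lgl_inv_norm_gt0.
by case/andP: (hsig j) => sig_ge0 sig_le1; rewrite ger0_norm.
Qed.
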